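(* Let $n\in\{2,3,4,5\}$, let $\zeta_n$ be a primitive $n$-th root of unity, and let $$M_q=\begin{pmatrix}\mathcal{R}(q) & \mathcal{V}(q)\\ \mathcal{S}(q) & \mathcal{U}(q)\end{pmatrix}\in G_q.$$ If the image of $M_q|_{q=1}\in\mathrm{SL}(2,\mathbb{Z})$ in $\mathrm{GL}(2,\mathbb{Z}/n\mathbb{Z})$ equals $\pm E_2$ (where $E_2$ is the identity matrix), then $\mathcal{R}(\zeta_n)=\mathcal{U}(\zeta_n)=\pm\zeta_n^j$ for some $0\le j<n$ and $\mathcal{V}(\zeta_n)=\mathcal{S}(\zeta_n)=0$.
   Context: Let $q$ be a formal parameter and let $R_q=\begin{pmatrix} q & 1\\ 0 & 1\end{pmatrix}$, $S_q=\begin{pmatrix} 0 & -q^{-1}\\ 1 & 0\end{pmatrix}\in \mathrm{GL}(2,\mathbb{Z}[q,q^{-1}])$. Let $G_q=\langle R_q,S_q\rangle$ be the group they generate. *)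

From HB Require Import structures.
From mathcomp Require Import all_boot all_order all_algebra all_field.
Set Implicit Arguments. Unset Strict Implicit. Unset Printing Implicit Defensive.
Import Order.TTheory GRing.Theory Num.Theory.
Local Open Scope ring_scope.

(* Letters of words in the generators R_q, S_q of G_q and their inverses. *)
Inductive gen_letter := LR | LRinv | LS | LSinv.

(* The generators (and their inverses) of G_q, specialised at a unit q = x
   of a commutative ring: R_x = [[x,1],[0,1]], S_x = [[0,-x^-1],[1,0]]. *)
Definition gen_mx (R : comUnitRingType) (x : R) (l : gen_letter) : 'M[R]_2 :=
  match l with
  | LR    => \matrix_(i < 2, j < 2)
               (if i == 0 then (if j == 0 then x else 1) else (if j == 0 then 0 else 1))
  | LRinv => \matrix_(i < 2, j < 2)
               (if i == 0 then (if j == 0 then x^-1 else - x^-1) else (if j == 0 then 0 else 1))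
  | LS    => \matrix_(i < 2, j < 2)
               (if i == 0 then (if j == 0 then 0 else - x^-1) else (if j == 0 then 1 else 0))
  | LSinv => \matrix_(i < 2, j < 2)
               (if i == 0 then (if j == 0 then 0 else 1) else (if j == 0 then - x else 0))
  end.

(* The element M_q of G_q given by the word w, specialised at q = x
   (specialisation q |-> x is a ring morphism Z[q,q^-1] -> R, so this is
   exactly M_q|_{q=x}). *)
Definition word_mx (R : comUnitRingType) (x : R) (w : seq gen_letter) : 'M[R]_2 :=
  foldr (fun l M => gen_mx x l *m M) 1%:M w.

From HB Require Import structures.
From mathcomp Require Import all_boot all_order all_algebra all_field.
From mathcomp Require Import ring.
Import Order.TTheory GRing.Theory Num.Theory.
Set Implicit Arguments. Unset Strict Implicit. Unset Printing Implicit Defensive.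
Local Open Scope ring_scope.

(* Specialising q to 1 and reducing mod n, and specialising q to zeta, are both
   compatible with products, so a word w in the generators determines the pair
   (M_1 mod n, M_zeta).  Writing elements of Z[zeta] as integer coefficient
   vectors reduced modulo the n-th cyclotomic polynomial makes the pairs
   reachable from the identity a finite set (of 600 elements for n = 5).  It
   is enumerated by computation, checked to be closed under the four
   generators, and checked to contain only pairs whose second component is
   +-zeta^j E_2 whenever the first one is +-E_2. *)

Fixpoint add_coefs (v w : seq int) : seq int :=
  match v, w with
  | c :: v', d :: w' => (c + d) :: add_coefs v' w'
  | [::], _ => w
  | _, [::] => v
  end.

Definition opp_coefs (v : seq int) : seq int := map -%R v.

(* Cancelling the last coefficient against 1 + X + ... + X^(n-1) is sound for
   every n > 1 but gives unique representatives only for n prime; for n = 4 we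
   reduce modulo 1 + X^2 instead, which keeps the orbit below finite. *)
Definition reduce_coefs (n : nat) (v : seq int) : seq int :=
  if n == 4%N then [:: v`_0 - v`_2; v`_1 - v`_3; 0; 0]
  else map (fun c => c - last 0 v) v.

Lemma size_add_coefs (v w : seq int) :
  size v = size w -> size (add_coefs v w) = size v.
Proof. by elim: v w => [|a v IH] [|b w] //= [] /IH ->. Qed.

Lemma size_reduce_coefs n (v : seq int) :
  size v = n -> size (reduce_coefs n v) = n.
Proof. by rewrite /reduce_coefs; case: eqP => [-> | _] //; rewrite size_map. Qed.

Section HornerInt.
Variable R : comPzRingType.
Implicit Types (z : R) (v w : seq int).

Fixpoint horner_int z v : R :=
  if v is c :: v' then c%:~R + z * horner_int z v' else 0.

Lemma horner_int_add z v w :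
  horner_int z (add_coefs v w) = horner_int z v + horner_int z w.
Proof.
elim: v w => [|c v IH] [|d w] /=; rewrite ?addr0 ?add0r // IH intrD; ring.
Qed.

Lemma horner_int_opp z v : horner_int z (opp_coefs v) = - horner_int z v.
Proof. by elim: v => [|c v IH] /=; rewrite ?oppr0 // IH intrN mulrN opprD. Qed.

Lemma horner_int_cat z v w :
  horner_int z (v ++ w) = horner_int z v + z ^+ size v * horner_int z w.
Proof. by elim: v => [|c v IH] /=; rewrite ?add0r ?mul1r // IH exprS; ring. Qed.

Lemma horner_int_nseq0 z k : horner_int z (nseq k 0) = 0.
Proof. by elim: k => //= k ->; rewrite mulr0 addr0. Qed.

Lemma horner_int_shift z c v :
  horner_int z (map (fun a => a - c) v) =
  horner_int z v - c%:~R * \sum_(i < size v) z ^+ i.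
Proof.
elim: v => [|a v IH] /=; first by rewrite big_ord0 mulr0 subr0.
rewrite big_ord_recl IH intrB expr0.
rewrite [in RHS](eq_bigr (fun i : 'I_(size v) => z * z ^+ i)) => [|i _].
  by rewrite -mulr_sumr; ring.
by rewrite -exprS.
Qed.

Lemma horner_int_rotr1 z v :
  z ^+ size v = 1 -> horner_int z (rotr 1 v) = z * horner_int z v.
Proof.
case/lastP: v => [|v c]; first by rewrite mulr0.
rewrite rotr1_rcons size_rcons -cats1 horner_int_cat /= => zn.
by rewrite mulr0 addr0 mulrDr mulrA -exprS zn mul1r addrC.
Qed.

End HornerInt.

Lemma horner_int_rot1 (R : comUnitRingType) (z : R) (v : seq int) :
  z ^+ size v = 1 -> horner_int z (rot 1 v) = z^-1 * horner_int z v.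
Proof.
case: v => [|c v] zn; first by rewrite mulr0.
have z_unit : z \is a GRing.unit by apply/unitrPr; exists (z ^+ size v); rewrite -exprS.
by rewrite -{2}(rotK 1 (c :: v)) horner_int_rotr1 ?size_rot // mulKr.
Qed.

Lemma prim_root_sum_expr (R : idomainType) n (z : R) :
  (1 < n)%N -> n.-primitive_root z -> \sum_(i < n) z ^+ i = 0.
Proof.
move=> n_gt1 pz; have /eqP := subrX1 z n; rewrite prim_expr_order // subrr eq_sym.
by rewrite mulf_eq0 subr_eq0 -[z]expr1 -(prim_order_dvd pz) dvdn1 gtn_eqF // => /eqP.
Qed.

Lemma horner_int_reduce (R : idomainType) n (z : R) (v : seq int) :
  (1 < n)%N -> n.-primitive_root z -> size v = n ->
  horner_int z (reduce_coefs n v) = horner_int z v.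
Proof.
move=> n_gt1 pz size_v; rewrite /reduce_coefs; case: eqP => [n4 | _]; last first.
  by rewrite horner_int_shift size_v prim_root_sum_expr // mulr0 subr0.
rewrite {}n4 in pz size_v; have z2 : z ^+ 2 = -1.
  have /eqP := prim_expr_order pz; rewrite -[4%N]/(2 * 2)%N exprM sqrf_eq1.
  by rewrite -(prim_order_dvd pz) => /orP[// | /eqP].
case: v size_v => [|a [|b [|c [|d [|]]]]] //= _; rewrite !mulr0 !addr0 !intrB.
apply/eqP; rewrite -subr_eq0; apply/eqP.
by transitivity (- (c%:~R + z * d%:~R) * (z ^+ 2 + 1)); [ring | rewrite z2 addNr mulr0].
Qed.

Definition quad (T : Type) := (T * T * T * T)%type.

Definition all_quad (T : Type) (P : pred T) (q : quad T) : bool :=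
  let: (a, b, c, d) := q in [&& P a, P b, P c & P d].

Definition mx_of_quad (T R : Type) (f : T -> R) (q : quad T) : 'M[R]_2 :=
  let: (a, b, c, d) := q in
  \matrix_(i < 2, j < 2)
    f (if i == 0 then (if j == 0 then a else b) else (if j == 0 then c else d)).

Section GeneratorAction.
Variables (T : Type) (add : T -> T -> T) (opp mulx mulxinv : T -> T).

Definition gen_act (l : gen_letter) (q : quad T) : quad T :=
  let: (a, b, c, d) := q in
  match l with
  | LR => (add (mulx a) c, add (mulx b) d, c, d)
  | LRinv => (mulxinv (add a (opp c)), mulxinv (add b (opp d)), c, d)
  | LS => (opp (mulxinv c), opp (mulxinv d), a, b)
  | LSinv => (c, d, opp (mulx a), opp (mulx b))
  end.

Variable P : pred T.
Hypothesis P_add : {in P &, forall a b, P (add a b)}.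
Hypothesis P_opp : {in P, forall a, P (opp a)}.
Hypothesis P_mulx : {in P, forall a, P (mulx a)}.
Hypothesis P_mulxinv : {in P, forall a, P (mulxinv a)}.

Lemma all_quad_gen_act l q : all_quad P q -> all_quad P (gen_act l q).
Proof.
case: q => [[[a b] c] d] /and4P[Pa Pb Pc Pd].
by case: l; apply/and4P; split;
  do ?[apply: P_add | apply: P_opp | apply: P_mulx | apply: P_mulxinv].
Qed.

Lemma all_quad_foldr q0 w : all_quad P q0 -> all_quad P (foldr gen_act q0 w).
Proof. by move=> P_q0; elim: w => //= l w; apply: all_quad_gen_act. Qed.

Variables (R : comUnitRingType) (x : R) (f : T -> R).
Hypothesis f_add : {in P &, {morph f : a b / add a b >-> a + b}}.
Hypothesis f_opp : {in P, {morph f : a / opp a >-> - a}}.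
Hypothesis f_mulx : {in P, forall a, f (mulx a) = x * f a}.
Hypothesis f_mulxinv : {in P, forall a, f (mulxinv a) = x^-1 * f a}.

Lemma mx_of_quad_gen_act l q :
  all_quad P q -> mx_of_quad f (gen_act l q) = gen_mx x l *m mx_of_quad f q.
Proof.
case: q => [[[a b] c] d] /and4P[Pa Pb Pc Pd].
apply/matrixP => i j; rewrite !mxE big_ord_recl big_ord1.
case: l; rewrite /= !mxE; case: i => [[|[|i]] Hi]; case: j => [[|[|j]] Hj] //=;
  rewrite ?(f_mulx, f_mulxinv, f_add, f_opp);
  first [ring | by do ?[apply: P_add | apply: P_opp | apply: P_mulx | apply: P_mulxinv]].
Qed.

Lemma mx_of_quad_foldr q0 w :
  all_quad P q0 -> mx_of_quad f q0 = 1 -> mx_of_quad f (foldr gen_act q0 w) = word_mx x w.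
Proof.
move=> P_q0 f_q0; elim: w => [|l w IH] /=; first by rewrite f_q0.
by rewrite mx_of_quad_gen_act ?IH ?all_quad_foldr.
Qed.

End GeneratorAction.

Lemma word_mx_map (R S : comUnitRingType) (f : {rmorphism R -> S}) (x : R) w :
  x \is a GRing.unit -> map_mx f (word_mx x w) = word_mx (f x) w.
Proof.
move=> x_unit; elim: w => [|l w IH] /=; first exact: map_mx1.
rewrite map_mxM IH; congr (_ *m _); apply/matrixP => i j.
by case: l; rewrite !mxE; do 2!case: ifP => _; rewrite ?rmorphN ?rmorphV ?rmorph1 ?rmorph0.
Qed.

Definition act_modn (n : nat) : gen_letter -> quad nat -> quad nat :=
  gen_act (fun a b => (a + b) %% n)%N (fun a => (n.-1 * a) %% n)%N id id.

Definition one_modn : quad nat := (1, 0, 0, 1)%N.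

Lemma mx_of_one_modn n : mx_of_quad (fun a => a%:R : 'Z_n) one_modn = 1.
Proof. by apply/matrixP => -[[|[|i]] Hi] [[|[|j]] Hj]; rewrite !mxE. Qed.

Lemma natr_predn_Zp n : (1 < n)%N -> ((n.-1)%:R : 'Z_n) = -1.
Proof.
move=> n_gt1; apply/eqP; rewrite -subr_eq0 opprK natr1 prednK ?pchar_Zp //.
exact: ltnW.
Qed.

Lemma natr_Zp_inj n a b :
  (1 < n)%N -> (a < n)%N -> (b < n)%N -> (a%:R : 'Z_n) = b%:R -> a = b.
Proof.
by move=> n_gt1 a_lt b_lt /(congr1 (@nat_of_ord _)); rewrite !val_Zp_nat // !modn_small.
Qed.

Lemma bounded_act_modn n w :
  (1 < n)%N -> all_quad (fun a => a < n)%N (foldr (act_modn n) one_modn w).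
Proof.
move=> n_gt1; have n_gt0 := ltnW n_gt1.
by apply: all_quad_foldr => [a b _ _|a _|a|a|] //=; rewrite ?ltn_pmod ?n_gt1 ?n_gt0.
Qed.

Lemma mx_of_quad_modn n w : (1 < n)%N ->
  mx_of_quad (fun a => a%:R : 'Z_n) (foldr (act_modn n) one_modn w) = word_mx 1 w.
Proof.
move=> n_gt1; apply: (@mx_of_quad_foldr _ _ _ _ _ predT) => //.
- by move=> a b _ _; rewrite Zp_nat_mod // natrD.
- by move=> a _; rewrite Zp_nat_mod // natrM natr_predn_Zp // mulN1r.
- by move=> a _; rewrite mul1r.
- by move=> a _; rewrite invr1 mul1r.
- exact: mx_of_one_modn.
Qed.

Definition signed_monomial (n j : nat) (s : bool) : seq int :=
  nseq j 0 ++ (-1) ^+ s :: nseq (n - j.+1) 0.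

Lemma size_signed_monomial n j s : (j < n)%N -> size (signed_monomial n j s) = n.
Proof. by move=> j_lt; rewrite size_cat /= !size_nseq -addSnnS subnKC. Qed.

Lemma horner_int_signed_monomial (R : comPzRingType) (z : R) n j s :
  horner_int z (signed_monomial n j s) = (-1) ^+ s * z ^+ j.
Proof.
rewrite horner_int_cat horner_int_nseq0 /= horner_int_nseq0 size_nseq.
by rewrite mulr0 addr0 add0r intr_sign mulrC.
Qed.

Definition act_cyclo (n : nat) : gen_letter -> quad (seq int) -> quad (seq int) :=
  gen_act add_coefs opp_coefs (reduce_coefs n \o rotr 1) (reduce_coefs n \o rot 1).

Definition one_cyclo (n : nat) : quad (seq int) :=
  (signed_monomial n 0 false, nseq n 0, nseq n 0, signed_monomial n 0 false).

Lemma mx_of_quad_cyclo (R : idomainType) n (z : R) w :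
  (1 < n)%N -> n.-primitive_root z ->
  mx_of_quad (horner_int z) (foldr (act_cyclo n) (one_cyclo n) w) = word_mx z w.
Proof.
move=> n_gt1 pz; have n_gt0 := ltnW n_gt1; have zn := prim_expr_order pz.
apply: (@mx_of_quad_foldr _ _ _ _ _ (fun v => size v == n)) => [v u|v|v|v|v u|v|v|v||].
- by move=> /eqP v_n /eqP u_n; rewrite size_add_coefs ?v_n ?u_n.
- by rewrite size_map.
- by move=> /eqP v_n; rewrite size_reduce_coefs // size_rotr.
- by move=> /eqP v_n; rewrite size_reduce_coefs // size_rot.
- by move=> _ _; apply: horner_int_add.
- by move=> _; apply: horner_int_opp.
- move=> /eqP v_n; rewrite horner_int_reduce ?size_rotr //.
  by rewrite horner_int_rotr1 // v_n.
- move=> /eqP v_n; rewrite horner_int_reduce ?size_rot //.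
  by rewrite horner_int_rot1 // v_n.
- by apply/and4P; rewrite !size_signed_monomial ?size_nseq.
- apply/matrixP => -[[|[|i]] Hi] [[|[|j]] Hj]; rewrite !mxE //=;
  by rewrite horner_int_nseq0 ?mulr0 ?addr0.
Qed.

Definition state := (quad nat * quad (seq int))%type.

Definition step (n : nat) (l : gen_letter) (s : state) : state :=
  (act_modn n l s.1, act_cyclo n l s.2).

Definition word_state (n : nat) (w : seq gen_letter) : state :=
  foldr (step n) (one_modn, one_cyclo n) w.

Lemma word_stateE n w :
  word_state n w = (foldr (act_modn n) one_modn w, foldr (act_cyclo n) (one_cyclo n) w).
Proof. by elim: w => //= l w ->. Qed.

(* The fuel only needs to exceed the radius of the orbit: the result is used
   solely through the closure check in [orbit_certificate]. *)
Fixpoint bfs (T : eqType) (succ : T -> seq T) (fuel : nat) (X frontier : seq T) : seq T :=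
  if fuel is k.+1 then
    let new := undup [seq y <- flatten (map succ frontier) | y \notin X] in
    bfs succ k (X ++ new) new
  else X.

Definition successors (n : nat) (s : state) : seq state :=
  [seq step n l s | l <- [:: LR; LRinv; LS; LSinv]].

Definition state_orbit (n : nat) : seq state :=
  bfs (successors n) 40 [:: word_state n [::]] [:: word_state n [::]].

Definition pm_one_modn (n : nat) (A : quad nat) : bool :=
  (A == one_modn) || (A == (n.-1, 0, 0, n.-1))%N.

Definition scalar_root_cyclo (n : nat) (B : quad (seq int)) : bool :=
  let: (a, b, c, d) := B in
  [&& b == nseq n 0, c == nseq n 0, a == d &
      has (fun j => has (fun s => a == reduce_coefs n (signed_monomial n j s))
                        [:: false; true]) (iota 0 n)].

Definition orbit_certificate (n : nat) (X : seq state) : bool :=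
  [&& word_state n [::] \in X,
      all (fun s => all (mem X) (successors n s)) X &
      all (fun s => pm_one_modn n s.1 ==> scalar_root_cyclo n s.2) X].

Lemma orbit_certificate_small n : (2 <= n <= 5)%N -> orbit_certificate n (state_orbit n).
Proof.
have certified : all (fun k => orbit_certificate k (state_orbit k)) (iota 2 4).
  by vm_compute.
by move=> n_small; apply: (allP certified); rewrite mem_iota.
Qed.

Lemma foldr_mem_closed (A : Type) (T : eqType) (f : A -> T -> T) (x0 : T) (X : seq T) :
  x0 \in X -> (forall a, {in X, forall x, f a x \in X}) -> forall s, foldr f x0 s \in X.
Proof. by move=> x0_in X_closed; elim=> //= a s; apply: X_closed. Qed.

Lemma certified_word n X w : orbit_certificate n X ->
  pm_one_modn n (word_state n w).1 -> scalar_root_cyclo n (word_state n w).2.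
Proof.
case/and3P=> init_in /allP X_closed /allP X_scalar; apply/implyP/X_scalar.
apply: foldr_mem_closed init_in _ w => l s /X_closed.
by case: l => /and5P[].
Qed.

Lemma mx_of_quad_modn_inj n : (1 < n)%N ->
  {in [pred A | all_quad (fun a => a < n)%N A] &,
    injective (mx_of_quad (fun a => a%:R : 'Z_n))}.
Proof.
move=> n_gt1 [[[a b] c] d] [[[a' b'] c'] d'].
rewrite !inE => /and4P[a_lt b_lt c_lt d_lt] /and4P[a'_lt b'_lt c'_lt d'_lt] /matrixP e.
move: (e 0 0) (e 0 1) (e 1 0) (e 1 1); rewrite !mxE /=.
by move=> /(natr_Zp_inj n_gt1 a_lt a'_lt)-> /(natr_Zp_inj n_gt1 b_lt b'_lt)->
  /(natr_Zp_inj n_gt1 c_lt c'_lt)-> /(natr_Zp_inj n_gt1 d_lt d'_lt)->.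
Qed.

Lemma pm_one_modn_word n w : (1 < n)%N ->
  word_mx (1 : 'Z_n) w = 1 \/ word_mx (1 : 'Z_n) w = -1 ->
  pm_one_modn n (foldr (act_modn n) one_modn w).
Proof.
move=> n_gt1 hpm; have n_gt0 := ltnW n_gt1.
have opp_one_mx : mx_of_quad (fun a => a%:R : 'Z_n) (n.-1, 0, 0, n.-1)%N = -1.
  by apply/matrixP => -[[|[|i]] Hi] [[|[|j]] Hj]; rewrite !mxE /= ?natr_predn_Zp ?oppr0.
have inj := mx_of_quad_modn_inj n_gt1; rewrite -mx_of_quad_modn // in hpm.
apply/orP; case: hpm => [h | h]; [left | right]; apply/eqP/inj;
  by rewrite ?inE ?bounded_act_modn ?h ?mx_of_one_modn ?opp_one_mx //=
       ?n_gt1 ?n_gt0 ?prednK ?leqnn.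
Qed.

Lemma scalar_root_cycloP (R : idomainType) n (z : R) B :
  (1 < n)%N -> n.-primitive_root z -> scalar_root_cyclo n B ->
  exists j (s : bool), (j < n)%N /\ mx_of_quad (horner_int z) B = ((-1) ^+ s * z ^+ j)%:M.
Proof.
move=> n_gt1 pz; case: B => [[[a b] c] d] /and4P[/eqP-> /eqP-> /eqP<-].
case/hasP=> j; rewrite mem_iota add0n => /andP[_ j_lt] /hasP[s _ /eqP->].
exists j, s; split=> //; apply/matrixP => -[[|[|i]] Hi] [[|[|k]] Hk];
by rewrite !mxE /= ?horner_int_nseq0 // horner_int_reduce ?size_signed_monomial
  ?horner_int_signed_monomial.
Qed.

Theorem corollary3p9 (n : nat) (zeta : algC) (w : seq gen_letter) :
  (2 <= n <= 5)%N ->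
  n.-primitive_root zeta ->
  (map_mx (fun z : int => z%:~R : 'Z_n) (word_mx (1 : int) w) = 1 \/
   map_mx (fun z : int => z%:~R : 'Z_n) (word_mx (1 : int) w) = -1) ->
  exists (j : nat) (s : bool),
    (j < n)%N /\
    let M := word_mx zeta w in
    M 0 0 = (-1) ^+ s * zeta ^+ j /\ M 1 1 = (-1) ^+ s * zeta ^+ j /\
    M 0 1 = 0 /\ M 1 0 = 0.
Proof.
move=> n_small pz hpm; have n_gt1 : (1 < n)%N by case/andP: n_small.
rewrite (word_mx_map intr) ?unitr1 // rmorph1 in hpm.
have := certified_word (w := w) (orbit_certificate_small n_small).
rewrite word_stateE => /(_ (pm_one_modn_word n_gt1 hpm)).
case/(scalar_root_cycloP n_gt1 pz) => j [s [j_lt]].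
rewrite mx_of_quad_cyclo // => ->.
by exists j, s; split=> //=; rewrite !mxE.
Qed.
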